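(* Every $f\in\mathcal C^\infty(\mathbb R^{\mathbb N})$ is locally cylindrical: for every $x\in\mathbb R^{\mathbb N}$ there exist an open neighbourhood $U$ of $x$, a finite set $N_0\subset\mathbb N$ and a continuous function $g$ on $\pi_{N_0}(U)$ such that $f|_U=g\circ\pi_{N_0}|_U$, where $\pi_{N_0}:\mathbb R^{\mathbb N}\to\mathbb R^{N_0}$ is the coordinate projection.
   Context: $\mathbb R^{\mathbb N}$ is the space of real sequences with the product topology. It carries the canonical $\mathcal C^\infty$ structure of a product: its structure curves are the maps $c:\mathbb R\to\mathbb R^{\mathbb N}$ all of whose components $c_n:\mathbb R\to\mathbb R$ are smooth, and $\mathcal C^\infty(\mathbb R^{\mathbb N})$ is the set of functions $f:\mathbb R^{\mathbb N}\to\mathbb R$ such that $f\circ c\in C^\infty(\mathbb R,\mathbb R)$ for every structure curve $c$. *)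

From HB Require Import structures.
From mathcomp Require Import all_boot all_order all_algebra finmap.
From mathcomp Require Import all_classical all_reals all_analysis.
Set Implicit Arguments. Unset Strict Implicit. Unset Printing Implicit Defensive.
Import Order.TTheory GRing.Theory Num.Theory numFieldNormedType.Exports.
Local Open Scope classical_set_scope.
Local Open Scope ring_scope.

(* R^N : real sequences with the product topology (topology of pointwise
   convergence). *)
Notation RN R := {ptws nat -> R^o}.

Definition smooth (R : realType) (h : R -> R) : Prop :=
  forall (n : nat) (t : R), derivable (derive1n n h) t 1.

Definition structure_curve (R : realType) (c : R -> RN R) : Prop :=
  forall n : nat, smooth (fun t => c t n).

Definition Cinf_RN (R : realType) (f : RN R -> R) : Prop :=
  forall c : R -> RN R, structure_curve c -> smooth (f \o c).

Notation RN0 R N0 := {ptws N0 -> R^o}.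
Definition proj_N0 (R : realType) (N0 : {fset nat}) (x : RN R) : RN0 R N0 :=
  fun i : N0 => x (val i).
Arguments proj_N0 {R} N0 x.

From HB Require Import structures.
From mathcomp Require Import all_boot all_order all_algebra finmap.
From mathcomp Require Import all_classical all_reals all_analysis.
From mathcomp Require Import ring lra zify.
Set Implicit Arguments. Unset Strict Implicit. Unset Printing Implicit Defensive.
Import Order.TTheory GRing.Theory Num.Theory numFieldNormedType.Exports.
Local Open Scope classical_set_scope.
Local Open Scope ring_scope.

(* Structure curves can be made to pass through any sequence of points P k
   that converges fast enough to x. With t_k = (3/2) / 2^k and a smooth bump psi
   supported in (1, 2) and equal to 1 near 3/2, the curve
   t |-> x + sum_k (P k - x) psi (2^k t) is smooth at 0 as soon as
   |P k i - x i| <= 2^(-k^2) for i < k, because every coordinate then has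
   rapidly decreasing coefficients. As f o c is continuous at 0, f (P k) tends
   to f x: f is continuous for the product topology, hence so is its
   restriction to the finitely many coordinates of a box.
   If f did not depend on finitely many coordinates near x, there would be
   pairs Y k, Z k in the k-th box, agreeing on the first k coordinates, with
   f (Y k) <> f (Z k). Adding to coordinate n the finitely many window terms
   (Z k n - Y k n) chi_k (t), k <= n, makes the curve also pass through Z k at
   t_k + d_k, where d_k <= |f (Z k) - f (Y k)| / (k + 1). Since (f o c)' is
   bounded near 0, the mean value theorem gives |f (Z k) - f (Y k)| <= B d_k,
   which is absurd once k + 1 > B. *)

Section DerivableUpto.
Context {R : realType}.
Implicit Types (f g : R -> R) (a b c : R).

Fixpoint derivable_upto (n : nat) f : Prop :=
  if n is n'.+1 then (forall t, derivable f t 1) /\ derivable_upto n' (derive1 f)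
  else True.

Lemma smoothP f : smooth f <-> forall n, derivable_upto n f.
Proof.
split.
  move=> sf n; elim: n f sf => [//|n IH] f sf; split; first exact: (sf 0%N).
  by apply: IH => m t; rewrite -derive1Sn; apply: sf.
move=> H n; elim: n f H => [|n IH] f H t; first by case: (H 1%N).
by rewrite derive1Sn; apply: IH => m; case: (H m.+1).
Qed.

Lemma derivable_uptoW n f : derivable_upto n.+1 f -> derivable_upto n f.
Proof. by elim: n f => [//|n IH] f [df Hf]; split => //; apply: IH. Qed.

Lemma derivable_upto_cst n c : derivable_upto n (cst c).
Proof.
elim: n c => [//|n IH] c; split; first by move=> t; apply: derivable_cst.
suff -> : derive1 (cst c) = cst 0 :> (R -> R) by apply: IH.
by apply: boolp.funext => t; rewrite derive1_cst.
Qed.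

Lemma derivable_uptoD n f g :
  derivable_upto n f -> derivable_upto n g -> derivable_upto n (f + g).
Proof.
elim: n f g => [//|n IH] f g [df Hf] [dg Hg]; split.
  by move=> t; apply: derivableD.
suff -> : derive1 (f + g) = derive1 f + derive1 g by apply: IH.
by apply: boolp.funext => t; rewrite /= !derive1E deriveD // -!derive1E.
Qed.

Lemma derivable_uptoM n f g :
  derivable_upto n f -> derivable_upto n g -> derivable_upto n (f * g).
Proof.
elim: n f g => [//|n IH] f g Hf Hg; have [df Hf'] := Hf; have [dg Hg'] := Hg.
split; first by move=> t; apply: derivableM.
have -> : derive1 (f * g) = f * derive1 g + g * derive1 f.
  by apply: boolp.funext => t; rewrite /= !derive1E deriveM // -!derive1E.
by apply: derivable_uptoD; apply: IH => //; apply: derivable_uptoW.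
Qed.

Lemma derivable_upto_sum n (I : finType) (F : I -> R -> R) :
  (forall i, derivable_upto n (F i)) ->
  derivable_upto n (fun t => \sum_(i : I) F i t).
Proof.
move=> HF; rewrite -(@fct_sumE _ _ _ _ _ F).
elim/big_ind: _ => //; first exact: derivable_upto_cst.
exact: derivable_uptoD.
Qed.

Lemma derivable_uptoV n f : (forall t, f t != 0) ->
  derivable_upto n f -> derivable_upto n (fun t => (f t)^-1).
Proof.
move=> f_neq0; elim: n f f_neq0 => [//|n IH] f f_neq0 Hf; have [df Hf'] := Hf.
split; first by move=> t; apply: derivableV.
have -> : derive1 (fun t => (f t)^-1) =
    cst (-1) * ((fun t => (f t)^-1) * (fun t => (f t)^-1)) * derive1 f.
  apply: boolp.funext => t; rewrite /= !derive1E deriveV //=.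
  by rewrite -!derive1E !fctE /= mulN1r -invfM -expr2.
apply: derivable_uptoM => //; apply: derivable_uptoM; first exact: derivable_upto_cst.
by apply: derivable_uptoM; apply: IH => //; apply: derivable_uptoW.
Qed.

Lemma derivable_upto_comp_affine n f a b :
  derivable_upto n f -> derivable_upto n (fun t => f (a * t + b)).
Proof.
have affine_deriv (t : R) : is_derive t (1 : R) (fun t => a * t + b) a.
  have H : is_derive t (1 : R) (a *: id + cst b) (a *: 1 + 0) by apply: is_deriveD.
  by rewrite scaler1 addr0 in H.
elim: n f => [//|n IH] f [df Hf].
have comp_deriv t : is_derive t (1 : R) (fun t => f (a * t + b)) (derive1 f (a * t + b) * a).
  by rewrite derive1E; exact: (is_derive1_comp (g := fun t => a * t + b)).
split; first by move=> t; case: (comp_deriv t).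
have -> : derive1 (fun t => f (a * t + b)) = cst a * (fun t => derive1 f (a * t + b)).
  by apply: boolp.funext => t; rewrite derive1E derive_val /= mulrC.
by apply: derivable_uptoM; [exact: derivable_upto_cst|apply: IH].
Qed.

End DerivableUpto.

Section FlatFunctions.
Context {R : realType}.
Implicit Types (f : R -> R) (p : {poly R}).

Lemma is_derive0_flat f a :
  (forall e : R, 0 < e -> exists2 d : R, 0 < d &
     forall h, 0 < `|h| < d -> `|f (h + a) - f a| <= e * `|h|) ->
  is_derive a (1 : R) f 0.
Proof.
move=> flat.
have C : (fun h : R => h^-1 *: ((f \o shift a) (h *: 1) - f a)) @ 0^' --> (0 : R).
  apply/cvgrPdist_le => e e0; have [d d0 Hd] := flat e e0.
  exists d => //= h /=; rewrite sub0r normrN => hd h_neq0.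
  rewrite sub0r normrN /= scaler1 normrM normrV ?unitfE //.
  by rewrite ler_pdivrMl ?normr_gt0 // mulrC; apply: Hd; rewrite normr_gt0 h_neq0.
apply: DeriveDef; first by apply/cvg_ex; exists 0.
exact: cvg_lim C.
Qed.

Lemma horner_expRN_small p (e : R) : 0 < e ->
  exists2 M : R, 1 <= M & forall x, M <= x -> `|p.[x]| * expR (- x) <= e.
Proof.
move=> e0; set d := size p; set A := \sum_(i < d) `|p`_i|.
have A0 : 0 <= A by apply: sumr_ge0.
set K := A * (d.+1)`!%:R.
have K0 : 0 <= K by rewrite mulr_ge0.
exists (1 + K / e) => [|x Mx]; first by rewrite lerDl divr_ge0 // ltW.
have x1 : 1 <= x by apply: le_trans Mx; rewrite lerDl divr_ge0 // ltW.
have x0 : 0 < x by apply: lt_le_trans x1.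
have p_le : `|p.[x]| <= A * x ^+ d.
  rewrite horner_coef /A mulr_suml; apply: le_trans (ler_norm_sum _ _ _) _.
  apply: ler_sum => i _; rewrite normrM normrX (ger0_norm (ltW x0)).
  by apply: ler_wpM2l => //; apply: ler_weXn2l => //; exact: ltnW.
have exp_ge : x ^+ d.+1 / (d.+1)`!%:R <= expR x.
  by apply: le_trans (expR_ge1Dxn d (ltW x0)); rewrite lerDr.
have fact_d_gt0 : 0 < (d.+1)`!%:R :> R by rewrite ltr0n fact_gt0.
rewrite expRN ler_pdivrMr ?expR_gt0 //; apply: le_trans p_le _.
apply: le_trans (ler_wpM2l (ltW e0) exp_ge).
rewrite exprS mulrA [e * _]mulrC -!mulrA mulrCA [A * _]mulrC.
apply: ler_wpM2l; first exact: exprn_ge0 (ltW x0).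
have Kx : K / e <= x by apply: le_trans Mx; rewrite lerDr.
by rewrite ler_pdivrMr // in Kx; rewrite mulrA ler_pdivlMr.
Qed.

(* The derivative of p(1/u) exp(-1/u) on u > 0 is q(1/u) exp(-1/u) with
   q = X^2 (p - p'). *)
Definition flatp p (u : R) : R :=
  if 0 < u then p.[u^-1] * expR (- u^-1) else 0.

Definition flatp_dpoly p : {poly R} := 'X^2 * (p - p^`()).

Lemma flatp_le0 p u : u <= 0 -> flatp p u = 0.
Proof. by move=> u_le0; rewrite /flatp ltNge u_le0. Qed.

Lemma flatp_small p (e : R) : 0 < e -> exists2 d : R, 0 < d &
  forall h, 0 < `|h| < d -> `|flatp p h| <= e * `|h|.
Proof.
move=> e0; have [M M1 HM] := horner_expRN_small (p * 'X) e0.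
have M0 : 0 < M by apply: lt_le_trans M1.
exists M^-1 => [|h /andP[h0 hM]]; first by rewrite invr_gt0.
have [h_le0|h_gt0] := lerP h 0; first by rewrite flatp_le0 // normr0 mulr_ge0 // ltW.
rewrite /flatp h_gt0 (gtr0_norm h_gt0) in hM *.
have hinv_gt0 : 0 < h^-1 by rewrite invr_gt0.
have := HM h^-1; rewrite hornerM hornerX normrM (gtr0_norm hinv_gt0) => H.
rewrite normrM (ger0_norm (expR_ge0 _)) -(ler_pM2r hinv_gt0).
rewrite mulrK ?unitfE ?gt_eqF // mulrAC; apply: H.
by rewrite -(invrK M) lef_pV2 ?posrE ?invr_gt0 // ltW.
Qed.

Lemma is_derive_flatp p t : is_derive t (1 : R) (flatp p) (flatp (flatp_dpoly p) t).
Proof.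
have [t_lt0|t_gt0|->] := ltgtP t 0.
- rewrite flatp_le0 ?ltW //; apply: near_eq_is_derive (is_derive_cst 0 t 1).
  by near=> u; rewrite flatp_le0 // ltW //; near: u; apply: lt_nbhsl.
- have t_neq0 : t != 0 by rewrite gt_eqF.
  have inv_d : is_derive t (1 : R) (fun u : R => u^-1) (- t^-2).
    by have := @is_deriveV R id t 1 1 t_neq0 (is_derive_id _ _); rewrite scaler1.
  have hp := @is_derive1_comp R (horner p) (fun u : R => u^-1) t _ _
    (is_derive_poly p t^-1) inv_d.
  have ninv : is_derive t (1 : R) (fun u : R => - u^-1) (t^-2).
    by have := @is_deriveN _ _ _ (fun u : R => u^-1) t 1 _ inv_d; rewrite opprK.
  have he := @is_derive1_comp R expR (fun u : R => - u^-1) t _ _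
    (is_derive_expR (- t^-1)) ninv.
  apply: is_derive_eq.
    apply: near_eq_is_derive (is_deriveM hp he).
    by near=> u; rewrite /flatp; have -> : 0 < u by near: u; apply: lt_nbhsr.
  by rewrite /flatp t_gt0 /flatp_dpoly !hornerE /= -exprVn /GRing.scale /=; ring.
- rewrite flatp_le0 //; apply: is_derive0_flat => e e0.
  have [d d0 Hd] := flatp_small p e0.
  by exists d => // h hd; rewrite addr0 (flatp_le0 p (lexx 0)) subr0; apply: Hd.
Unshelve. all: by end_near.
Qed.

Lemma derivable_upto_flatp n p : derivable_upto n (flatp p).
Proof.
elim: n p => [//|n IH] p; split; first by move=> t; case: (is_derive_flatp p t).
suff -> : derive1 (flatp p) = flatp (flatp_dpoly p) by [].
by apply: boolp.funext => t; have H := is_derive_flatp p t; rewrite derive1E derive_val.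
Qed.

End FlatFunctions.

Section Bumps.
Context {R : realType}.
Implicit Types (u v t : R).

Definition expinv : R -> R := flatp 1.

Lemma expinv_le0 u : u <= 0 -> expinv u = 0.
Proof. exact: flatp_le0. Qed.

Lemma expinv_gt0 u : 0 < u -> 0 < expinv u.
Proof. by move=> u_gt0; rewrite /expinv /flatp u_gt0 hornerC mul1r expR_gt0. Qed.

Lemma expinv_ge0 u : 0 <= expinv u.
Proof.
by have [/expinv_gt0/ltW //|u_le0] := ltP 0 u; rewrite expinv_le0.
Qed.

Definition smoothstep u : R := expinv u / (expinv u + expinv (1 - u)).

Lemma smoothstep_le0 u : u <= 0 -> smoothstep u = 0.
Proof. by move=> u_le0; rewrite /smoothstep expinv_le0 // mul0r. Qed.

Lemma smoothstep_ge1 u : 1 <= u -> smoothstep u = 1.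
Proof.
move=> u_ge1; rewrite /smoothstep (@expinv_le0 (1 - u)) ?subr_le0 // addr0.
by rewrite divff // gt_eqF // expinv_gt0 // (lt_le_trans ltr01).
Qed.

Lemma derivable_upto_smoothstep n : derivable_upto n smoothstep.
Proof.
have expinv1B : (fun u => expinv (1 - u)) = (fun u => expinv (-1 * u + 1)).
  by apply: boolp.funext => u; congr expinv; ring.
apply: (@derivable_uptoM _ _ expinv); first exact: derivable_upto_flatp.
apply: derivable_uptoV => [u|].
  rewrite gt_eqF //; have := expinv_ge0 u; have := expinv_ge0 (1 - u).
  have [/expinv_gt0|u_le0] := ltP 0 u; first lra.
  have : 0 < expinv (1 - u) by apply: expinv_gt0; lra.
  lra.
apply: (@derivable_uptoD _ _ expinv (fun u => expinv (1 - u))).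
  exact: derivable_upto_flatp.
by rewrite expinv1B; apply: derivable_upto_comp_affine; exact: derivable_upto_flatp.
Qed.

Definition bump u : R := smoothstep (8 * u + 3) * smoothstep (3 - 8 * u).

Lemma bump_out u : 3/8 <= `|u| -> bump u = 0.
Proof.
rewrite ler_normr /bump => /orP[] u38.
  by rewrite (@smoothstep_le0 (3 - 8 * u)) ?mulr0 //; lra.
by rewrite smoothstep_le0 ?mul0r //; lra.
Qed.

Lemma bump_in u : `|u| <= 1/4 -> bump u = 1.
Proof.
rewrite ler_norml => /andP[u1 u2].
by rewrite /bump !smoothstep_ge1 ?mulr1 //; lra.
Qed.

Lemma derivable_upto_bump n : derivable_upto n bump.
Proof.
have -> : bump = (fun u => smoothstep (8 * u + 3)) * (fun u => smoothstep (-8 * u + 3)).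
  by apply: boolp.funext => u; rewrite /bump !fctE; congr (_ * smoothstep _); ring.
by apply: derivable_uptoM; apply: derivable_upto_comp_affine;
  exact: derivable_upto_smoothstep.
Qed.

Definition dyadic_bump v : R := bump (v - 3/2).

Lemma derivable_upto_dyadic_bump n : derivable_upto n dyadic_bump.
Proof.
have -> : dyadic_bump = (fun v => bump (1 * v + - (3/2))).
  by apply: boolp.funext => v; rewrite mul1r.
exact: derivable_upto_comp_affine (derivable_upto_bump n).
Qed.

Lemma dyadic_bump_out v : v <= 9/8 \/ 15/8 <= v -> dyadic_bump v = 0.
Proof. by move=> v_out; apply: bump_out; rewrite ler_normr; apply/orP; lra. Qed.

Lemma dyadic_bump_in v : 5/4 <= v <= 7/4 -> dyadic_bump v = 1.
Proof. by move=> /andP[v1 v2]; apply: bump_in; rewrite ler_norml; apply/andP; lra. Qed.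

Definition window (d tau t : R) : R := bump ((t - tau) / d - 1).

Lemma derivable_upto_window n d tau : derivable_upto n (window d tau).
Proof.
have -> : window d tau = (fun t => bump (d^-1 * t + (- (tau / d + 1)))).
  by apply: boolp.funext => t; rewrite /window; congr bump; ring.
exact: derivable_upto_comp_affine (derivable_upto_bump n).
Qed.

Lemma window_left d tau t : 0 < d -> t <= tau -> window d tau t = 0.
Proof.
move=> d_gt0 t_le; apply: bump_out; rewrite ler_normr; apply/orP; right.
have : (t - tau) / d <= 0 by rewrite pmulr_lle0 ?invr_gt0 // subr_le0.
lra.
Qed.

Lemma window_right d tau t : 0 < d -> tau + 2 * d <= t -> window d tau t = 0.
Proof.
move=> d_gt0 t_ge; apply: bump_out; rewrite ler_normr; apply/orP; left.
have : 2 <= (t - tau) / d by rewrite ler_pdivlMr //; lra.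
lra.
Qed.

Lemma window_mid d tau : 0 < d -> window d tau (tau + d) = 1.
Proof.
move=> d_gt0; apply: bump_in.
by rewrite addrAC subrr add0r divff ?gt_eqF // subrr normr0.
Qed.

End Bumps.

Lemma sum_ord_widen0 {V : nmodType} (F : nat -> V) (N N' : nat) : (N <= N')%N ->
  (forall k, (N <= k)%N -> F k = 0) -> \sum_(k < N') F k = \sum_(k < N) F k.
Proof.
move=> NN' F0; rewrite [RHS](big_ord_widen N' F NN') [RHS]big_mkcond /=.
by apply: eq_bigr => k _; case: ltnP => // /F0.
Qed.

Section DyadicSeries.
Context {R : realType}.
Implicit Types (phi : R -> R) (a : nat -> R) (t h v : R).

Definition dyadic_supp phi := forall v, v < 9/8 \/ 15/8 < v -> phi v = 0.

Definition rapid a :=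
  forall j : nat, exists C : R, forall k, `|a k| * ((2 : R) ^+ k) ^+ j <= C.

(* For dyadic_supp phi only the terms with 1 < 2^k t < 2 are nonzero; the
   cutoff merely makes the sum finite (see dyadic_series_eq). *)
Definition dyadic_cutoff t : nat := (Num.truncn (2 / t)).+1.

Definition dyadic_series phi a t : R :=
  \sum_(k < dyadic_cutoff t) a k * phi (2 ^+ k * t).

Lemma dyadic_supp_out phi v : dyadic_supp phi -> v <= 1 \/ 2 <= v -> phi v = 0.
Proof. by move=> phi0 [v1|v2]; apply: phi0; [left|right]; lra. Qed.

Lemma dyadic_supp_derive1 phi : dyadic_supp phi -> dyadic_supp (derive1 phi).
Proof.
move=> phi0 v v_out; rewrite -(derive1_cst (0 : R) v) !derive1E.
apply: near_eq_derive.
have out_open : open [set v : R | v < 9/8 \/ 15/8 < v].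
  by apply: openU; [apply: open_lt|apply: open_gt].
exact: filterS (open_nbhs_nbhs (conj out_open v_out)) => u /phi0.
Qed.

Lemma dyadic_supp_derive1n phi n : dyadic_supp phi -> dyadic_supp (derive1n n phi).
Proof.
by move=> phi0; elim: n => [//|n IH]; rewrite derive1nS; apply: dyadic_supp_derive1.
Qed.

Lemma dyadic_supp_bounded phi : dyadic_supp phi -> continuous phi ->
  exists B : R, forall v, `|phi v| <= B.
Proof.
move=> phi0 phi_cont.
have [|c _ Hc] := @EVT_max R (fun v => `|phi v|) 1 2 (ler1n R 2).
  apply: continuous_subspaceT => v.
  by apply: continuous_comp; [exact: phi_cont|exact: norm_continuous].
exists `|phi c| => v; have [v12|] := boolP (v \in `[1, 2]); first exact: Hc.
rewrite in_itv /= negb_and -!ltNge => v_out.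
by rewrite (@dyadic_supp_out phi v) ?normr0 //; case/orP: v_out => /ltW; by [left|right].
Qed.

Lemma natr_le_pow2 (k : nat) : (k%:R : R) <= 2 ^+ k.
Proof. by rewrite -natrX ler_nat ltnW // ltn_expl. Qed.

Lemma dyadic_series_le0 phi a t : dyadic_supp phi -> t <= 0 -> dyadic_series phi a t = 0.
Proof.
move=> phi0 t_le0; rewrite /dyadic_series big1 // => k _.
have : 2 ^+ k * t <= 0 by rewrite mulr_ge0_le0 // exprn_ge0.
by move=> kt_le0; rewrite (@dyadic_supp_out phi) ?mulr0 //; left; lra.
Qed.

Lemma dyadic_series_eq phi a t (M : nat) : dyadic_supp phi -> 2 <= M%:R * t ->
  dyadic_series phi a t = \sum_(k < M) a k * phi (2 ^+ k * t).
Proof.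
move=> phi0 Mt.
have t_gt0 : 0 < t.
  rewrite ltNge; apply/negP => t_le0.
  have : M%:R * t <= 0 by rewrite mulr_ge0_le0.
  lra.
have tail N k : 2 <= N%:R * t -> (N <= k)%N -> a k * phi (2 ^+ k * t) = 0.
  move=> Nt Nk; rewrite (@dyadic_supp_out phi) ?mulr0 //; right.
  apply: le_trans Nt (ler_wpM2r (ltW t_gt0) _).
  by apply: le_trans (natr_le_pow2 k); rewrite ler_nat.
have cutoff : 2 <= (dyadic_cutoff t)%:R * t by rewrite ltW // -ltr_pdivrMr // truncnS_gt.
pose F k := a k * phi (2 ^+ k * t).
rewrite /dyadic_series; have [le|le] := leqP (dyadic_cutoff t) M.
  by rewrite (sum_ord_widen0 (F := F) le) // => k; apply: tail.
by rewrite (sum_ord_widen0 (F := F) (ltnW le)) // => k; apply: tail.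
Qed.

End DyadicSeries.

Section DyadicSeriesDerivative.
Context {R : realType}.
Implicit Types (phi : R -> R) (a : nat -> R) (t h v : R).

Lemma dyadic_supp_neq0 phi v : dyadic_supp phi -> phi v != 0 -> 1 < v < 2.
Proof.
move=> phi0 phiv; rewrite !ltNge; apply/andP; split; apply/negP => v_out;
  by move/eqP: phiv; apply; apply: dyadic_supp_out => //; by [left|right].
Qed.

Lemma pow2_mul_window_uniq (i j : nat) h :
  1 < 2 ^+ i * h < 2 -> 1 < 2 ^+ j * h < 2 -> i = j.
Proof.
wlog ij : i j / (i <= j)%N => [hwlog|].
  by case/orP: (leq_total i j) => ij hi hj; [|apply/esym]; apply: hwlog.
move=> /andP[hi1 hi2] /andP[hj1 hj2]; apply/eqP; rewrite eqn_leq ij leqNgt /=.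
apply/negP => lt_ij.
have h_gt0 : 0 < h.
  rewrite ltNge; apply/negP => h_le0.
  have : 2 ^+ i * h <= 0 by rewrite mulr_ge0_le0 // exprn_ge0.
  lra.
have : 2 * (2 ^+ i * h) <= 2 ^+ j * h.
  by rewrite mulrA -exprS ler_pM2r // ler_eXn2l // ltr1n.
lra.
Qed.

Lemma dyadic_series_sq_bound phi a (B C : R) h : dyadic_supp phi ->
  (forall v, `|phi v| <= B) -> (forall k, `|a k| * ((2 : R) ^+ k) ^+ 2 <= C) ->
  `|dyadic_series phi a h| <= C * B * h ^+ 2.
Proof.
move=> phi0 phiB aC.
have B0 : 0 <= B := le_trans (normr_ge0 _) (phiB 0).
have C0 : 0 <= C by apply: le_trans (aC 0%N); rewrite mulr_ge0 // exprn_ge0.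
have CBh0 : 0 <= C * B * h ^+ 2 by apply: mulr_ge0; [exact: mulr_ge0|exact: sqr_ge0].
have [[k0 phik0]|none] :=
  pselect (exists k : 'I_(dyadic_cutoff h), phi (2 ^+ k * h) != 0); last first.
  rewrite /dyadic_series big1 ?normr0 // => k _.
  by have [->|phik] := eqVneq (phi (2 ^+ k * h)) 0; [rewrite mulr0|case: none; exists k].
have /andP[k0h1 _] := dyadic_supp_neq0 phi0 phik0.
rewrite /dyadic_series (bigD1 k0) //= big1 ?addr0 => [|k k_neq0]; last first.
  have [->|phik] := eqVneq (phi (2 ^+ k * h)) 0; first by rewrite mulr0.
  move: k_neq0; have := pow2_mul_window_uniq (dyadic_supp_neq0 phi0 phik)
    (dyadic_supp_neq0 phi0 phik0).
  by move/val_inj => ->; rewrite eqxx.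
rewrite normrM mulrAC ler_pM // -[leLHS]mulr1.
apply: le_trans (_ : `|a k0| * (((2 : R) ^+ k0) ^+ 2 * h ^+ 2) <= _).
  by rewrite ler_wpM2l // -exprMn exprn_ege1 // ltW.
by rewrite mulrA ler_wpM2r // sqr_ge0.
Qed.

Lemma is_derive_dyadic_series_gt0 phi a t : dyadic_supp phi ->
  (forall v, derivable phi v 1) -> 0 < t ->
  is_derive t (1 : R) (dyadic_series phi a)
    (dyadic_series (derive1 phi) (fun k => 2 ^+ k * a k) t).
Proof.
move=> phi0 phi_der t_gt0; set M := dyadic_cutoff (t / 2).
have t2_gt0 : 0 < t / 2 by rewrite divr_gt0.
have M_large u : t / 2 < u -> 2 <= M%:R * u.
  move=> tu; rewrite ltW // (lt_le_trans _ (ler_wpM2l (ler0n _ _) (ltW tu))) //.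
  by rewrite -ltr_pdivrMr // truncnS_gt.
have t2_lt : t / 2 < t by rewrite ltr_pdivrMr // ltr_pMr // ltr1n.
have term_deriv k : is_derive t (1 : R) (fun u => a k * phi (2 ^+ k * u))
    (a k * (derive1 phi (2 ^+ k * t) * 2 ^+ k)).
  have lin : is_derive t (1 : R) (fun u : R => 2 ^+ k * u) (2 ^+ k).
    have := @is_deriveZ _ _ _ id (2 ^+ k : R) t 1 _ (is_derive_id _ _).
    by rewrite scaler1.
  have := is_derive1_comp (g := fun u => 2 ^+ k * u)
    (derivableP (phi_der (2 ^+ k * t))) lin.
  by move=> H; rewrite derive1E; exact: (is_deriveZ (a k) H).
have sum_deriv := is_derive_sum (fun k : 'I_M => term_deriv k).
rewrite fct_sumE in sum_deriv.
apply: is_derive_eq.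
  apply: near_eq_is_derive sum_deriv.
  near=> u; rewrite (dyadic_series_eq _ phi0 (M_large u _)) //.
  by near: u; apply: lt_nbhsr.
rewrite (dyadic_series_eq _ (dyadic_supp_derive1 phi0) (M_large t t2_lt)).
by apply: eq_bigr => k _; rewrite /=; ring.
Unshelve. all: by end_near.
Qed.

Lemma is_derive_dyadic_series phi a t : dyadic_supp phi ->
  (forall v, derivable phi v 1) -> rapid a ->
  is_derive t (1 : R) (dyadic_series phi a)
    (dyadic_series (derive1 phi) (fun k => 2 ^+ k * a k) t).
Proof.
move=> phi0 phi_der arap; have phi0' := dyadic_supp_derive1 phi0.
have [t_lt0|t_gt0|->] := ltgtP t 0; last 2 first.
- exact: is_derive_dyadic_series_gt0.
- rewrite dyadic_series_le0 //; apply: is_derive0_flat => e e0.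
  have [C aC] := arap 2%N.
  have [B phiB] : exists B : R, forall v, `|phi v| <= B.
    apply: dyadic_supp_bounded => // v.
    exact/differentiable_continuous/derivable1_diffP.
  set K := `|C * B| + 1.
  have K_gt0 : 0 < K by rewrite ltr_pwDr.
  exists (e / K) => [|h /andP[h_gt0 hK]]; first by rewrite divr_gt0.
  rewrite addr0 (dyadic_series_le0 _ phi0 (lexx 0)) subr0.
  apply: le_trans (dyadic_series_sq_bound h phi0 phiB aC) _.
  rewrite -[h ^+ 2]real_normK ?num_real // expr2 mulrA ler_pM2r //.
  apply: le_trans (_ : K * `|h| <= _).
    by rewrite ler_pM2r // (le_trans (ler_norm _)) // lerDl.
  by rewrite mulrC -ler_pdivlMr // ltW.
- rewrite dyadic_series_le0 ?ltW //; apply: near_eq_is_derive (is_derive_cst 0 t 1).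
  by near=> u; rewrite dyadic_series_le0 // ltW //; near: u; apply: lt_nbhsl.
Unshelve. all: by end_near.
Qed.

Lemma rapid_scale a m : rapid a -> rapid (fun k => ((2 : R) ^+ k) ^+ m * a k).
Proof.
move=> arap j; have [C aC] := arap (m + j)%N; exists C => k.
by rewrite normrM ger0_norm ?exprn_ge0 // mulrAC -exprD mulrC.
Qed.

Lemma derive1n_dyadic_series phi a m : smooth phi -> dyadic_supp phi -> rapid a ->
  derive1n m (dyadic_series phi a) =
  dyadic_series (derive1n m phi) (fun k => ((2 : R) ^+ k) ^+ m * a k).
Proof.
move=> phi_smooth phi0 arap; elim: m => [|m IH].
  by rewrite derive1n0; congr dyadic_series; apply: boolp.funext => k; rewrite expr0 mul1r.
rewrite derive1nS IH; apply: boolp.funext => t.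
have := is_derive_dyadic_series t (dyadic_supp_derive1n m phi0) (phi_smooth m)
  (rapid_scale m arap).
move=> H; rewrite derive1E derive_val derive1nS; congr dyadic_series.
by apply: boolp.funext => k; rewrite mulrA -exprS.
Qed.

Lemma dyadic_series_smooth phi a : smooth phi -> dyadic_supp phi -> rapid a ->
  smooth (dyadic_series phi a).
Proof.
move=> phi_smooth phi0 arap m t; rewrite derive1n_dyadic_series //.
have := is_derive_dyadic_series t (dyadic_supp_derive1n m phi0) (phi_smooth m)
  (rapid_scale m arap).
by case.
Qed.

End DyadicSeriesDerivative.

Section InterpolatingCurve.
Context {R : realType}.
Implicit Types (a : nat -> R) (s d tau : R).

Definition dyadic_node (j : nat) : R := 3/2 / 2 ^+ j.

Let pow2_mulK (j : nat) s : 2 ^+ j * (s / 2 ^+ j) = s.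
Proof. by rewrite mulrCA divff ?mulr1 // gt_eqF // exprn_gt0. Qed.

Lemma dyadic_supp_dyadic_bump : dyadic_supp (@dyadic_bump R).
Proof. by move=> v v_out; apply: dyadic_bump_out; lra. Qed.

Lemma dyadic_node_gt0 j : 0 < dyadic_node j.
Proof. by rewrite divr_gt0 // exprn_gt0. Qed.

Lemma dyadic_scale_far (j k : nat) s : k != j -> 3/2 <= s <= 7/4 ->
  2 ^+ k * (s / 2 ^+ j) <= 7/8 \/ 3 <= 2 ^+ k * (s / 2 ^+ j).
Proof.
move=> kj /andP[s1 s2]; rewrite mulrCA.
have pow2_ge2 m n : (m < n)%N -> 2 <= (2 : R) ^+ (n - m).
  by move=> mn; rewrite -[leLHS]expr1 ler_eXn2l ?ltr1n // subn_gt0.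
have [lt|gt|eq] := ltngtP k j; last by rewrite eq eqxx in kj.
- left; rewrite -invf_div -expfB // ler_pdivrMr ?exprn_gt0 //.
  have := pow2_ge2 _ _ lt; lra.
- right; rewrite -expfB //.
  have : 3/2 * 2 <= s * 2 ^+ (k - j) by apply: ler_pM; [lra|lra|lra|exact: pow2_ge2].
  lra.
Qed.

Lemma dyadic_series_node a (j : nat) s : 3/2 <= s <= 7/4 ->
  dyadic_series dyadic_bump a (s / 2 ^+ j) = a j.
Proof.
move=> /andP[s1 s2].
have M_large : 2 <= (2 ^ j.+1)%:R * (s / 2 ^+ j).
  by rewrite natrX exprS -mulrA pow2_mulK; lra.
have jM : (j < 2 ^ j.+1)%N by apply: ltn_trans (ltn_expl _ _).
rewrite (dyadic_series_eq _ dyadic_supp_dyadic_bump M_large) (bigD1 (Ordinal jM)) //=.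
rewrite pow2_mulK dyadic_bump_in ?mulr1; last by apply/andP; lra.
rewrite big1 ?addr0 // => k k_neq_j; rewrite dyadic_bump_out ?mulr0 //.
have kj : (k : nat) != j by apply: contra k_neq_j => /eqP kj; apply/eqP/val_inj.
by case: (dyadic_scale_far kj (s := s)) => [|h|h]; [apply/andP; lra|left; lra|right; lra].
Qed.

Lemma window_far (j k : nat) s d : k != j -> 3/2 <= s <= 7/4 -> 0 < d ->
  2 ^+ k * d <= 1/4 -> window d (dyadic_node k) (s / 2 ^+ j) = 0.
Proof.
move=> kj s_range d_gt0 kd; have pk : 0 < (2 : R) ^+ k by rewrite exprn_gt0.
case: (dyadic_scale_far kj s_range) => h.
  by apply: window_left; rewrite // -(ler_pM2l pk) pow2_mulK; lra.
apply: window_right; rewrite // -(ler_pM2l pk) mulrDr pow2_mulK.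
by rewrite mulrCA; lra.
Qed.

Lemma rapid_of_eventually a n :
  (forall k, (n < k)%N -> `|a k| * ((2 : R) ^+ k) ^+ k <= 1) -> rapid a.
Proof.
move=> a_small j; set S := \sum_(k < n + j + 1) `|a k| * ((2 : R) ^+ k) ^+ j.
have S_ge0 : 0 <= S by apply: sumr_ge0 => k _; rewrite mulr_ge0 // !exprn_ge0.
exists (1 + S) => k; have [lt|ge] := ltnP k (n + j + 1).
  apply: le_trans (_ : S <= 1 + S); last by rewrite lerDr.
  rewrite /S (bigD1 (Ordinal lt)) //= lerDl.
  by apply: sumr_ge0 => i _; rewrite mulr_ge0 // !exprn_ge0.
apply: le_trans (_ : 1 <= 1 + S); last by rewrite lerDl.
apply: le_trans (a_small k _); last by lia.
apply: ler_wpM2l => //; apply: ler_weXn2l; last by lia.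
by rewrite exprn_ege1 // ler1n.
Qed.

(* A smooth curve through x at t = 0, through P k at dyadic_node k and through
   Q k at dyadic_node k + d k; since Q k n = P k n for n < k, the n-th
   component only needs the windows with k <= n. *)
Definition interp_curve (x : nat -> R) (P Q : nat -> nat -> R) (d : nat -> R)
    (t : R) (n : nat) : R :=
  x n + dyadic_series dyadic_bump (fun k => P k n - x n) t
      + \sum_(k < n.+1) (Q k n - P k n) * window (d k) (dyadic_node k) t.

Variables (x : nat -> R) (P Q : nat -> nat -> R) (d : nat -> R).
Hypothesis P_near : forall k i, (i < k)%N -> `|P k i - x i| * ((2 : R) ^+ k) ^+ k <= 1.
Hypothesis Q_eq : forall k i, (i < k)%N -> Q k i = P k i.
Hypothesis d_gt0 : forall k, 0 < d k.
Hypothesis d_small : forall k, 2 ^+ k * d k <= 1/4.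

Lemma interp_curve_smooth n : smooth (fun t => interp_curve x P Q d t n).
Proof.
apply/smoothP => m; apply: derivable_uptoD; last first.
  apply: derivable_upto_sum => k; apply: derivable_uptoM (derivable_upto_cst _ _) _.
  exact: derivable_upto_window.
apply: derivable_uptoD (derivable_upto_cst _ _) _; move: m; apply/smoothP.
apply: dyadic_series_smooth dyadic_supp_dyadic_bump _.
  by apply/smoothP; exact: derivable_upto_dyadic_bump.
by apply: (@rapid_of_eventually _ n) => k nk; apply: P_near.
Qed.

Lemma interp_curve0 n : interp_curve x P Q d 0 n = x n.
Proof.
rewrite /interp_curve dyadic_series_le0 ?addr0 //; last exact: dyadic_supp_dyadic_bump.
by rewrite big1 ?addr0 // => k _; rewrite window_left ?mulr0 // ltW // dyadic_node_gt0.
Qed.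

Lemma interp_curve_node j n : interp_curve x P Q d (dyadic_node j) n = P j n.
Proof.
rewrite /interp_curve {1}/dyadic_node dyadic_series_node; last by apply/andP; lra.
rewrite big1 ?addr0 => [|k _]; first by rewrite addrC subrK.
have [->|kj] := eqVneq (k : nat) j; first by rewrite window_left ?mulr0.
rewrite [X in window _ _ X]/dyadic_node window_far ?mulr0 //.
by apply/andP; lra.
Qed.

Lemma interp_curve_node_shift j n :
  interp_curve x P Q d (dyadic_node j + d j) n = Q j n.
Proof.
have pj : 0 < (2 : R) ^+ j by rewrite exprn_gt0.
have node_shift : dyadic_node j + d j = (3/2 + 2 ^+ j * d j) / 2 ^+ j.
  by rewrite /dyadic_node [RHS]mulrDl [2 ^+ j * _]mulrC mulfK ?gt_eqF.
have s_range : 3/2 <= 3/2 + 2 ^+ j * d j <= 7/4.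
  have := d_small j; have : 0 <= 2 ^+ j * d j by rewrite mulr_ge0 // ltW.
  by move=> *; apply/andP; lra.
rewrite /interp_curve node_shift dyadic_series_node //.
have [jn|nj] := ltnP j n.+1; last first.
  rewrite big1 ?addr0 => [|k _]; first by rewrite addrC subrK Q_eq.
  have kj : (k : nat) != j by apply/eqP => kj; move: (ltn_ord k); rewrite kj ltnNge nj.
  by rewrite window_far ?mulr0.
rewrite (bigD1 (Ordinal jn)) //= big1 => [|k k_neq_j].
  by rewrite -node_shift window_mid //; ring.
have kj : (k : nat) != j by apply: contra k_neq_j => /eqP kj; apply/eqP/val_inj.
by rewrite window_far ?mulr0.
Qed.

End InterpolatingCurve.

Section Boxes.
Context {R : realType}.

Lemma open_finite_box (I : eqType) (s : seq I) (p : {ptws I -> R^o}) (c : R) :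
  open [set q : {ptws I -> R^o} | forall i, i \in s -> `|q i - p i| < c].
Proof.
elim: s => [|i s IH].
  by rewrite (_ : [set q | _] = setT); [exact: openT|apply/seteqP; split].
have -> : [set q : {ptws I -> R^o} | forall j, j \in i :: s -> `|q j - p j| < c] =
    proj i @^-1` ball (p i) c `&`
    [set q : {ptws I -> R^o} | forall j, j \in s -> `|q j - p j| < c].
  apply/seteqP; split => q /=.
    move=> H; split; first by rewrite /ball /= distrC; apply: H; rewrite mem_head.
    by move=> j js; apply: H; rewrite in_cons js orbT.
  move=> [H1 H2] j; rewrite in_cons => /orP[/eqP->|]; last exact: H2.
  by move: H1; rewrite /ball /= distrC.
apply: openI => //; apply: open_comp; last exact: ball_open.
by move=> q _; exact: proj_continuous.
Qed.

(* 2^(-k^2): for points of box x k, rapid_of_eventually applies to the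
   coefficients of interp_curve. *)
Definition box_radius (k : nat) : R := (((2 : R) ^+ k) ^+ k)^-1.

Lemma box_radius_gt0 k : 0 < box_radius k.
Proof. by rewrite invr_gt0 !exprn_gt0. Qed.

Definition box (x : RN R) (k : nat) : set (RN R) :=
  [set y | forall i, (i < k)%N -> `|y i - x i| < box_radius k].

Lemma open_box x k : open (box x k).
Proof.
rewrite (_ : box x k =
    [set y | forall i, i \in iota 0 k -> `|y i - x i| < box_radius k]).
  exact: open_finite_box.
apply/seteqP; split => y /= H i; rewrite ?mem_iota ?add0n => ik.
  exact: H.
by apply: H; rewrite mem_iota.
Qed.

Lemma box_center x k : box x k x.
Proof. by move=> i _; rewrite subrr normr0 box_radius_gt0. Qed.

Lemma box_scaled_le1 x k y i : box x k y -> (i < k)%N ->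
  `|y i - x i| * ((2 : R) ^+ k) ^+ k <= 1.
Proof.
move=> yx ik; rewrite -ler_pdivlMr ?exprn_gt0 // mul1r; exact/ltW/yx.
Qed.

Definition box_curve (x : RN R) (P Q : nat -> RN R) (d : nat -> R) (t : R) : RN R :=
  interp_curve x P Q d t.

Variables (x : RN R) (P Q : nat -> RN R) (d : nat -> R).
Hypothesis P_box : forall k, box x k (P k).
Hypothesis Q_eq : forall k i, (i < k)%N -> Q k i = P k i.
Hypothesis d_gt0 : forall k, 0 < d k.
Hypothesis d_small : forall k, 2 ^+ k * d k <= 1/4.

Lemma structure_curve_box_curve : structure_curve (box_curve x P Q d).
Proof.
by move=> n; apply: interp_curve_smooth => k i; apply: box_scaled_le1 (@P_box k).
Qed.

Lemma box_curve0 : box_curve x P Q d 0 = x.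
Proof. by apply: boolp.funext => n; apply: interp_curve0. Qed.

Lemma box_curve_node j : box_curve x P Q d (dyadic_node j) = P j.
Proof. by apply: boolp.funext => n; apply: interp_curve_node. Qed.

Lemma box_curve_node_shift j : box_curve x P Q d (dyadic_node j + d j) = Q j.
Proof. by apply: boolp.funext => n; apply: interp_curve_node_shift. Qed.

End Boxes.

Section LocalStructure.
Context {R : realType}.

Lemma exists_pow2_inv_lt (r : R) (N : nat) : 0 < r ->
  exists2 j, (N <= j)%N & 2 / 2 ^+ j < r.
Proof.
move=> r_gt0; set j := maxn N (Num.truncn (2 / r)).+1.
exists j; first exact: leq_maxl.
rewrite ltr_pdivrMr ?exprn_gt0 // -ltr_pdivrMl // mulrC.
apply: lt_le_trans (truncnS_gt _) (le_trans _ (natr_le_pow2 j)).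
by rewrite ler_nat leq_maxr.
Qed.

Lemma dyadic_node_shift_lt (j : nat) (d : R) :
  2 ^+ j * d <= 1/4 -> dyadic_node j + d < 2 / 2 ^+ j.
Proof.
move=> jd; have pj : 0 < (2 : R) ^+ j by rewrite exprn_gt0.
rewrite /dyadic_node -(ltr_pM2r pj) [(_ + d) * _]mulrDl !divfK ?gt_eqF //.
by rewrite [d * _]mulrC; lra.
Qed.

Lemma smooth_lipschitz0 (F : R -> R) : smooth F ->
  exists2 r : R, 0 < r & exists2 B : R, 0 < B &
    forall a b, 0 <= a -> a < b -> b < r -> `|F b - F a| <= B * (b - a).
Proof.
move=> F_smooth; have F_der t : derivable F t 1 := F_smooth 0%N t.
have F'_cont : {for 0, continuous (derive1 F)}.
  by apply/differentiable_continuous/derivable1_diffP; exact: (F_smooth 1%N).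
have /(_ _ 1 ltr01) := (cvgrPdist_lt _ _).1 F'_cont => /nbhs_ballP [r r_gt0 F'_near].
exists r => //; exists (`|derive1 F 0| + 1) => [|a b a_ge0 ab br].
  by rewrite ltr_pwDr.
have F'_ab t : t \in `]a, b[ -> is_derive t 1 F (derive1 F t).
  by move=> _; rewrite derive1E; apply: derivableP.
have F_cont : {within `[a, b], continuous F}.
  by apply: continuous_subspaceT => t; apply/differentiable_continuous/derivable1_diffP.
have [xi] := @MVT _ F (derive1 F) a b ab F'_ab F_cont.
rewrite in_itv /= => /andP[axi xib] ->.
have ba_gt0 : 0 < b - a by rewrite subr_gt0.
rewrite normrM (gtr0_norm ba_gt0) ler_pM2r //.
have : `|derive1 F 0 - derive1 F xi| < 1.
  apply: F'_near; rewrite /ball /= sub0r normrN.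
  by rewrite gtr0_norm ?(le_lt_trans a_ge0) // (lt_trans xib).
have := ler_normB (derive1 F 0) (derive1 F 0 - derive1 F xi).
by rewrite opprB addrC subrK; lra.
Qed.

Lemma Cinf_RN_box_continuous (f : RN R -> R) : Cinf_RN f ->
  forall (x : RN R) (e : R), 0 < e ->
  exists k, forall y, box x k y -> `|f y - f x| < e.
Proof.
move=> f_smooth x e e_gt0; apply: contrapT => far.
have far_points k : exists y : RN R, box x k y /\ e <= `|f y - f x|.
  apply: contrapT => near; apply: far; exists k => y yx.
  by rewrite ltNge; apply/negP => ey; apply: near; exists y.
have [P HP] := boolp.choice far_points.
pose d k : R := 1/4 / 2 ^+ k.
have d_gt0 k : 0 < d k by rewrite divr_gt0 ?exprn_gt0.
have d_small k : 2 ^+ k * d k <= 1/4 by rewrite mulrC divfK ?gt_eqF ?exprn_gt0.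
have P_box k : box x k (P k) by case: (HP k).
have c_smooth : structure_curve (box_curve x P P d) := structure_curve_box_curve P_box.
have fc_cont : {for 0, continuous (f \o box_curve x P P d)}.
  by apply/differentiable_continuous/derivable1_diffP; exact: (f_smooth _ c_smooth 0%N).
have /(_ _ e e_gt0) := (cvgrPdist_lt _ _).1 fc_cont => /nbhs_ballP [r r_gt0 fc_near].
have [j _ jr] := exists_pow2_inv_lt 0 r_gt0.
have node_r : `|0 - dyadic_node j| < r.
  rewrite sub0r normrN gtr0_norm ?dyadic_node_gt0 // (lt_trans _ jr) //.
  by rewrite (le_lt_trans _ (dyadic_node_shift_lt (d_small j))) // lerDl ltW.
have := fc_near _ node_r; rewrite /= box_curve0 // box_curve_node // distrC.
by have [_ /le_lt_trans H /H] := HP j; rewrite ltxx.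
Qed.

Lemma Cinf_RN_locally_cylindrical (f : RN R -> R) : Cinf_RN f -> forall x : RN R,
  exists k, forall y z, box x k y -> box x k z ->
    (forall i, (i < k)%N -> y i = z i) -> f y = f z.
Proof.
move=> f_smooth x; apply: contrapT => H.
have far_pairs k : exists yz : RN R * RN R,
    [/\ box x k yz.1, box x k yz.2,
        forall i, (i < k)%N -> yz.2 i = yz.1 i & f yz.1 != f yz.2].
  apply: contrapT => Hk; apply: H; exists k => y z yx zx yz.
  apply: contrapT => /eqP fyz; apply: Hk; exists (y, z); split => //= i /yz -> //.
have [YZ HYZ] := boolp.choice far_pairs.
pose Y k := (YZ k).1; pose Z k := (YZ k).2.
pose D k := `|f (Z k) - f (Y k)|.
have D_gt0 k : 0 < D k by rewrite normr_gt0 subr_eq0 eq_sym; case: (HYZ k).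
pose d k := Num.min (1/4 / 2 ^+ k) (D k / k.+1%:R).
have d_gt0 k : 0 < d k by rewrite lt_min !divr_gt0 ?exprn_gt0.
have d_small k : 2 ^+ k * d k <= 1/4.
  by rewrite mulrC -ler_pdivlMr ?exprn_gt0 // ge_min lexx.
have Y_box k : box x k (Y k) by case: (HYZ k).
have ZY k : forall i, (i < k)%N -> Z k i = Y k i by case: (HYZ k).
have c_smooth : structure_curve (box_curve x Y Z d) := structure_curve_box_curve Y_box.
have [r r_gt0 [B B_gt0 FB]] := smooth_lipschitz0 (f_smooth _ c_smooth).
have [j jB jr] := exists_pow2_inv_lt (Num.truncn B) r_gt0.
have D_le : D j <= B * d j.
  have node_lt : dyadic_node j < dyadic_node j + d j by rewrite ltrDl.
  have := FB _ _ (ltW (dyadic_node_gt0 j)) node_lt.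
  rewrite /= box_curve_node_shift // box_curve_node // addrAC subrr add0r.
  by apply; apply: lt_trans (dyadic_node_shift_lt (d_small j)) jr.
have B_lt : B < j.+1%:R.
  by rewrite (lt_le_trans (truncnS_gt B)) // ler_nat.
have : B * d j < D j.
  have d_le : d j <= D j / j.+1%:R by rewrite ge_min lexx orbT.
  rewrite (le_lt_trans (ler_wpM2l (ltW B_gt0) d_le)) //.
  rewrite mulrCA gtr_pMr ?D_gt0 // ltr_pdivrMr ?ltr0n // mul1r.
  exact: B_lt.
lra.
Qed.

End LocalStructure.

Section Patch.
Context {R : realType} (N0 : {fset nat}).

Definition patch (x : RN R) (p : RN0 R N0) : RN R :=
  fun i => if insub i is Some j then p j else x i.

Lemma patch_in x p (j : N0) : patch x p (val j) = p j.
Proof.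
by rewrite /patch; case: insubP => [j' _ /val_inj ->|]; last rewrite (valP j).
Qed.

Lemma patch_out x p i : i \notin N0 -> patch x p i = x i.
Proof. by move=> iN; rewrite /patch; case: insubP => // j ij; rewrite ij in iN. Qed.

Lemma Cinf_RN_patch_continuous (f : RN R -> R) x : Cinf_RN f ->
  continuous (fun p : RN0 R N0 => (f (patch x p) : R^o)).
Proof.
move=> f_smooth p A /nbhs_ballP [e e_gt0 eA].
have [k fk] := Cinf_RN_box_continuous f_smooth (patch x p) e_gt0.
have p_near : nbhs p [set q : RN0 R N0 |
    forall j, j \in enum (fun _ : N0 => true) -> `|q j - p j| < box_radius k].
  apply: open_nbhs_nbhs; split; first exact: open_finite_box.
  by move=> j _; rewrite subrr normr0 box_radius_gt0.
apply: filterS p_near => q q_near; apply: eA; rewrite /ball /= distrC.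
apply: fk => i _; have [iN|iN] := boolP (i \in N0); last first.
  by rewrite !patch_out // subrr normr0 box_radius_gt0.
by rewrite -[i]/(val [` iN]%fset) !patch_in; apply: q_near; rewrite mem_enum.
Qed.

End Patch.

Theorem proposition6 (R : realType) (f : RN R -> R) :
  Cinf_RN f ->
  forall x : RN R,
    exists (U : set (RN R)) (N0 : {fset nat}) (g : RN0 R N0 -> R^o),
      [/\ open U, U x,
          {within proj_N0 N0 @` U, continuous g} &
          forall y, U y -> f y = g (proj_N0 N0 y)].
Proof.
move=> f_smooth x; have [k f_cyl] := Cinf_RN_locally_cylindrical f_smooth x.
pose N0 : {fset nat} := seq_fset tt (iota 0 k).
have N0E i : (i \in N0) = (i < k)%N by rewrite seq_fsetE mem_iota.
exists (box x k), N0, (fun p => f (patch x p)); split.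
- exact: open_box.
- exact: box_center.
- exact/continuous_subspaceT/Cinf_RN_patch_continuous.
move=> y yx.
have patch_y i : (i < k)%N -> patch x (proj_N0 N0 y) i = y i.
  by rewrite -N0E => iN; rewrite -[i]/(val [` iN]%fset) patch_in.
apply: f_cyl => //; first by move=> i ik; rewrite patch_y //; exact: yx.
by move=> i ik; rewrite patch_y.
Qed.
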